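(* For every positive integer $n$, $N'(n,n-1,0)=\frac{n(n+1)}{2}-1$.
   Context: $\mathbb{Z}_4$ is the ring of integers modulo $4$; a $\mathbb{Z}_4$-code of length $n$ is a $\mathbb{Z}_4$-submodule of $\mathbb{Z}_4^n$. Two codes are equivalent if one is obtained from the other by permuting coordinates and changing the signs of some coordinates. Every $\mathbb{Z}_4$-code is permutation-equivalent to one with generator matrix $\begin{pmatrix} I_{k_1} & A & B \\ O & 2I_{k_2} & 2D\end{pmatrix}$ with $A,D$ $(0,1)$-matrices and $B$ a $\mathbb{Z}_4$-matrix; the code then has type $4^{k_1}2^{k_2}$. The trivial extension of a code $C$ of length $n-1$ is $\{(c,0)\mid c\in C\}$ (the only code of length $0$ is the zero code). $N'(n,k_1,k_2)$ denotes the number of equivalence classes of $\mathbb{Z}_4$-codes of length $n$ and type $4^{k_1}2^{k_2}$ that are not equivalent to the trivial extension of any $\mathbb{Z}_4$-code of length $n-1$. *)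

From HB Require Import structures.
From mathcomp Require Import all_boot all_order all_algebra all_fingroup.
Set Implicit Arguments. Unset Strict Implicit. Unset Printing Implicit Defensive.
Import GRing.Theory.
Local Open Scope ring_scope.

(* Z_4 : 'Z_4 (4 >= 2, so this is genuinely Z/4Z). *)
Notation Z4 := 'Z_4.
Notation word n := 'rV[Z4]_n.

Definition is_code n (C : {set word n}) : bool :=
  [&& (0 : word n) \in C,
      [forall x in C, forall y in C, x + y \in C] &
      [forall a : Z4, forall x in C, a *: x \in C]].

(* C has type 4^k1 2^k2: C is isomorphic (as a Z4-module) to
   Z4^k1 x Z2^k2, witnessed by elements u_i and v_j with 2 v_j = 0 such that
   (a,b) |-> sum_i a_i u_i + sum_j b_j v_j is a bijection from
   Z4^k1 x {0,1}^k2 onto C. *)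
Definition type_map n k1 k2 (u : {ffun 'I_k1 -> word n})
    (v : {ffun 'I_k2 -> word n})
    (ab : {ffun 'I_k1 -> Z4} * {ffun 'I_k2 -> bool}) : word n :=
  \sum_i (ab.1 i) *: u i + \sum_j (ab.2 j)%:R *: v j.

Definition has_type n (C : {set word n}) (k1 k2 : nat) : bool :=
  [exists u : {ffun 'I_k1 -> word n}, exists v : {ffun 'I_k2 -> word n},
    [&& [forall j, v j *+ 2 == 0],
        injectiveb (type_map u v) &
        [set type_map u v ab | ab in predT] == C]].

Definition equiv_codes n (C D : {set word n}) : bool :=
  [exists s : 'S_n, exists e : {ffun 'I_n -> bool},
    D == [set (\row_i ((-1) ^+ e i * c 0 (s i))) | c : word n in C]].

(* Trivial extension of a code of length n.-1 to length n: c |-> (c, 0),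
   the new coordinate being the last one. *)
Definition triv_ext n (D : {set word n.-1}) : {set word n} :=
  [set (\row_(i < n) match (insub (nat_of_ord i) : option 'I_(n.-1)) with
                     | Some j => c 0 j
                     | None => 0
                     end) | c : word n.-1 in D].

Definition good_codes n (k1 k2 : nat) : {set {set word n}} :=
  [set C : {set word n} |
     [&& is_code C, has_type C k1 k2 &
         ~~ [exists D : {set word n.-1}, is_code D && equiv_codes C (triv_ext D)]]].

Definition Nprime n (k1 k2 : nat) : nat :=
  #|[set [set D in good_codes n k1 k2 | equiv_codes C D]
       | C in good_codes n k1 k2]|.

(* A code of type 4^(n-1) and length n is free of rank n - 1.  Reducing a
   generator matrix U modulo 2 gives a binary matrix of full rank, so n - 1
   columns of U form an invertible block, and the code is the orthogonal w^⊥
   of a single vector w having a coordinate equal to 1.  A signed permutation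
   acts on w^⊥ through w, and two vectors of Z4^n differ by a signed
   permutation iff they have the same number t of coordinates equal to 2 and
   the same number s of nonzero coordinates; t and s can be read off the
   code, as the numbers of i with e_i ∉ C ∋ 2 e_i and with e_i ∉ C.  Every
   pair 0 <= t < s <= n occurs, and w^⊥ is equivalent to a trivial extension
   exactly when s = 1, which leaves C(n+1, 2) - 1 classes. *)

From HB Require Import structures.
From mathcomp Require Import all_boot all_order all_algebra all_fingroup zify.
Set Implicit Arguments. Unset Strict Implicit. Unset Printing Implicit Defensive.
Import GRing.Theory.
Local Open Scope ring_scope.

Local Notation "''e_' i" := (@delta_mx Z4 1 _ ord0 i) (at level 8, i at level 2).

Ltac case_Z4 x := case: x => [[|[|[|[|?]]]] ?] //.

Lemma code_scale n (C : {set word n}) a x : is_code C -> x \in C -> a *: x \in C.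
Proof. by case/and3P => _ _ /forallP /(_ a) /forallP /(_ x) /implyP. Qed.

Lemma setT_code n : is_code [set: word n].
Proof.
apply/and3P; split; first by rewrite inE.
  by apply/forall_inP => x _; apply/forall_inP => y _; rewrite inE.
by apply/forallP => a; apply/forall_inP => x _; rewrite inE.
Qed.

Definition dot n (c w : word n) : Z4 := (c *m w^T) 0 0.

Lemma dotE n (c w : word n) : dot c w = \sum_i c 0 i * w 0 i.
Proof. by rewrite /dot mxE; apply: eq_bigr => i _; rewrite mxE. Qed.

Lemma dot0 n (w : word n) : dot 0 w = 0.
Proof. by rewrite /dot mul0mx mxE. Qed.

Lemma dotD n (c d w : word n) : dot (c + d) w = dot c w + dot d w.
Proof. by rewrite /dot mulmxDl mxE. Qed.

Lemma dotB n (c d w : word n) : dot (c - d) w = dot c w - dot d w.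
Proof. by rewrite /dot mulmxBl !mxE. Qed.

Lemma dotZ n a (c w : word n) : dot (a *: c) w = a * dot c w.
Proof. by rewrite /dot -scalemxAl mxE. Qed.

Lemma dot_delta n (w : word n) i : dot 'e_ i w = w 0 i.
Proof. by rewrite /dot -rowE !mxE. Qed.

Definition ortho n (w : word n) : {set word n} := [set c | dot c w == 0].

Lemma ortho_code n (w : word n) : is_code (ortho w).
Proof.
apply/and3P; split; first by rewrite inE dot0.
  apply/forall_inP => x; rewrite inE => /eqP x0.
  by apply/forall_inP => y; rewrite !inE dotD x0 => /eqP ->; rewrite addr0.
by apply/forallP => a; apply/forall_inP => x; rewrite !inE dotZ => /eqP ->; rewrite mulr0.
Qed.

Lemma ortho_eq_off n (w c d : word n) j : w 0 j = 1 -> c \in ortho w -> d \in ortho w ->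
  (forall k, k != j -> c 0 k = d 0 k) -> c = d.
Proof.
rewrite !inE !dotE (bigD1 j) //= [in X in _ -> _ -> X -> _](bigD1 j) //=.
move=> wj /eqP c0 /eqP d0 cd.
have sums : \sum_(k | k != j) c 0 k * w 0 k = \sum_(k | k != j) d 0 k * w 0 k.
  by apply: eq_bigr => k /cd ->.
rewrite wj !mulr1 sums in c0 d0.
have cdj : c 0 j = d 0 j by apply: (addIr (\sum_(k | k != j) d 0 k * w 0 k)); rewrite c0 d0.
by apply/rowP => k; have [->|/cd] := eqVneq k j.
Qed.

Lemma ortho_delta n (j : 'I_n) c : (c \in ortho 'e_ j) = (c 0 j == 0).
Proof. by rewrite inE /dot trmx_delta -colE mxE. Qed.

Definition monomial n (s : 'S_n) (e : {ffun 'I_n -> bool}) (c : word n) : word n :=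
  \row_i ((-1) ^+ e i * c 0 (s i)).

Lemma equiv_codesP n (C D : {set word n}) :
  reflect (exists s e, D = monomial s e @: C) (equiv_codes C D).
Proof.
apply: (iffP existsP) => [[s /existsP [e /eqP ->]]|[s [e ->]]]; first by exists s, e.
by exists s; apply/existsP; exists e.
Qed.

Lemma monomial_inj n (s : 'S_n) e : injective (monomial s e).
Proof.
move=> c d /rowP cd; apply/rowP => k; have := cd (s^-1 k)%g.
by rewrite !mxE permKV => /(congr1 ( *%R ((-1) ^+ e (s^-1 k)%g))); rewrite !signrMK.
Qed.

Lemma monomial_delta n (s : 'S_n) e a i :
  monomial s e (a *: 'e_ (s i)) = ((-1) ^+ e i * a) *: 'e_ i.
Proof.
apply/rowP => k; rewrite !mxE (inj_eq perm_inj) eqxx /=.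
by case: eqP => [->|_]; rewrite ?mulr1 ?mulr0.
Qed.

Lemma code_scale_sign n (C : {set word n}) (b : bool) a x : is_code C ->
  (((-1) ^+ b * a) *: x \in C) = (a *: x \in C).
Proof.
by move=> cC; apply/idP/idP => /(code_scale ((-1) ^+ b) cC); rewrite scalerA ?signrMK.
Qed.

Lemma mem_monomial_delta n (C : {set word n}) s e a i : is_code C ->
  (a *: 'e_ i \in monomial s e @: C) = (a *: 'e_ (s i) \in C).
Proof.
move=> cC; rewrite -[a in LHS](signrMK (e i)) -(monomial_delta s).
by rewrite mem_imset ?code_scale_sign //; apply: monomial_inj.
Qed.

Lemma dot_monomial n (s : 'S_n) e (c w : word n) :
  dot (monomial s e c) (monomial s e w) = dot c w.
Proof.
rewrite !dotE [RHS](reindex_inj (@perm_inj _ s)); apply: eq_bigr => i _.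
by rewrite !mxE mulrACA -expr2 sqrr_sign mul1r.
Qed.

Lemma ortho_monomial n (s : 'S_n) e (w : word n) :
  ortho (monomial s e w) = monomial s e @: ortho w.
Proof.
apply/setP => d; have [g _ gK] := injF_bij (@monomial_inj n s e).
by rewrite -[d]gK mem_imset ?inE ?dot_monomial //; apply: monomial_inj.
Qed.

Lemma ordcard_subproof n (A : {set 'I_n}) : (#|A| < n.+1)%N.
Proof. by rewrite ltnS; apply: leq_trans (max_card _) _; rewrite card_ord. Qed.

Definition ordcard n (A : {set 'I_n}) : 'I_n.+1 := Ordinal (ordcard_subproof A).

Definition profile n (C : {set word n}) : 'I_n.+1 * 'I_n.+1 :=
  (ordcard [set i | ('e_ i \notin C) && (2 *: 'e_ i \in C)],
   ordcard [set i | 'e_ i \notin C]).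

Lemma profile_monomial n (C : {set word n}) s e :
  is_code C -> profile (monomial s e @: C) = profile C.
Proof.
move=> cC; have mem a i := mem_monomial_delta s e a i cC.
have mem1 i : ('e_ i \in monomial s e @: C) = ('e_ (s i) \in C).
  by have := mem 1 i; rewrite !scale1r.
by congr (_, _); apply: val_inj; rewrite /= -[RHS](card_preimset _ (@perm_inj _ s));
  apply: eq_card => i; rewrite !inE ?mem mem1.
Qed.

Lemma profile_ortho n (w : word n) :
  profile (ortho w) = (ordcard [set i | w 0 i == 2], ordcard [set i | w 0 i != 0]).
Proof.
by congr (_, _); apply/val_inj/eq_card => i; rewrite !inE ?dotZ !dot_delta; case_Z4 (w 0 i).
Qed.

Definition unsign (x : Z4) : Z4 := if x == -1 then 1 else x.

Lemma unsign_sign (x y : Z4) : unsign x = unsign y -> (-1) ^+ (x != y) * x = y.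
Proof. by move/eqP; case_Z4 x; case_Z4 y => _; apply/eqP. Qed.

Lemma card_unsign n (w : word n) y :
  #|[set i | unsign (w 0 i) == y]| =
    if y == 0 then subn n #|[set i | w 0 i != 0]|
    else if y == 1 then subn #|[set i | w 0 i != 0]| #|[set i | w 0 i == 2]|
    else if y == 2 then #|[set i | w 0 i == 2]| else 0%N.
Proof.
set NZ := [set i | w 0 i != 0]; set N2 := [set i | w 0 i == 2].
have N2NZ : N2 \subset NZ by apply/subsetP => i; rewrite !inE => /eqP ->.
case_Z4 y => /=.
- rewrite cardsCs card_ord; congr (_ - _)%N.
  by apply: eq_card => i; rewrite !inE; case_Z4 (w 0 i).
- rewrite -(setIidPr N2NZ) -cardsD.
  by apply: eq_card => i; rewrite !inE; case_Z4 (w 0 i).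
- by apply: eq_card => i; rewrite !inE; case_Z4 (w 0 i).
apply/eqP; rewrite cards_eq0; apply/eqP/setP => i; rewrite !inE; case_Z4 (w 0 i).
Qed.

Lemma count_unsign n (w : word n) y :
  count_mem y [tuple unsign (w 0 i) | i < n] = #|[set i | unsign (w 0 i) == y]|.
Proof.
rewrite /= count_map cardE /enum_mem size_filter /= count_filter.
by apply: eq_count => i; rewrite !inE andbT.
Qed.

Lemma monomial_of_profile n (w w' : word n) :
  #|[set i | w 0 i == 2]| = #|[set i | w' 0 i == 2]| ->
  #|[set i | w 0 i != 0]| = #|[set i | w' 0 i != 0]| ->
  exists s e, w' = monomial s e w.
Proof.
move=> eq2 eqNZ.
have /tuple_permP [s /val_inj/= ws] :
    perm_eq [tuple unsign (w' 0 i) | i < n] [tuple unsign (w 0 i) | i < n].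
  by apply/allP => y _ /=; rewrite !count_unsign !card_unsign eq2 eqNZ.
exists s, [ffun i => w 0 (s i) != w' 0 i]; apply/rowP => i; rewrite mxE ffunE.
apply/esym/unsign_sign; have := congr1 (fun t => tnth t i) ws.
by rewrite !tnth_mktuple.
Qed.

Lemma equiv_ortho n (w w' : word n) :
  equiv_codes (ortho w) (ortho w') = (profile (ortho w) == profile (ortho w')).
Proof.
apply/idP/eqP => [/equiv_codesP [s [e ->]]|]; first by rewrite profile_monomial ?ortho_code.
rewrite !profile_ortho => -[eq2 eqNZ].
have [s [e ->]] := monomial_of_profile eq2 eqNZ.
by apply/equiv_codesP; exists s, e; rewrite ortho_monomial.
Qed.

Definition red (x : Z4) : 'F_2 := (x : nat)%:R.

Lemma red_is_zmod_morphism : zmod_morphism red.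
Proof. by move=> x y; apply/eqP; case_Z4 x; case_Z4 y. Qed.

Lemma red_is_monoid_morphism : monoid_morphism red.
Proof. by split=> // x y; apply/eqP; case_Z4 x; case_Z4 y. Qed.

HB.instance Definition _ := GRing.isZmodMorphism.Build _ _ red red_is_zmod_morphism.
HB.instance Definition _ := GRing.isMonoidMorphism.Build _ _ red red_is_monoid_morphism.

Definition lift_F2 (x : 'F_2) : Z4 := (x : nat)%:R.

Lemma red_liftK : cancel lift_F2 red.
Proof. by case=> [[|[|?]] ?]; apply/eqP. Qed.

Lemma red_unit (x : Z4) : red x != 0 -> x \is a GRing.unit.
Proof. by case_Z4 x. Qed.

Lemma red_eq0 (x : Z4) : (red x == 0) = (2 * x == 0).
Proof. by case_Z4 x. Qed.

Lemma lift_F2_eq0 (x : 'F_2) : (2 * lift_F2 x == 0) = (x == 0).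
Proof. by case: x => [[|[|?]] ?]. Qed.

Lemma has_type_generator n k (C : {set word n}) : has_type C k 0 ->
  exists2 U : 'M[Z4]_(k, n), injective (fun a : 'rV_k => a *m U)
                           & C = [set a *m U | a : 'rV_k].
Proof.
case/existsP => u /existsP [v /and3P [_ /injectiveP tm_inj /eqP tm_im]].
pose U : 'M[Z4]_(k, n) := \matrix_i u i.
pose pair_of (a : 'rV_k) : {ffun 'I_k -> Z4} * {ffun 'I_0 -> bool} :=
  ([ffun i => a 0 i], [ffun=> false]).
have pair_ofK (p : {ffun 'I_k -> Z4} * {ffun 'I_0 -> bool}) : pair_of (\row_i p.1 i) = p.
  case: p => a b; congr (_, _); first by apply/ffunP => i; rewrite ffunE mxE.
  by apply/ffunP => -[].
have tmE a : type_map u v (pair_of a) = a *m U.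
  rewrite /type_map big_ord0 addr0 mulmx_sum_row; apply: eq_bigr => i _.
  by rewrite ffunE; congr (_ *: _); apply/rowP => j; rewrite !mxE.
exists U.
  move=> a b; rewrite -!tmE => /tm_inj /(congr1 (fun p => p.1)) /ffunP ab.
  by apply/rowP => i; have := ab i; rewrite !ffunE.
rewrite -tm_im; apply/setP => c; apply/imsetP/imsetP => [[p _ ->]|[a _ ->]].
  by exists (\row_i p.1 i); rewrite // -tmE pair_ofK.
by exists (pair_of a); rewrite ?tmE.
Qed.

Lemma red_row_free k n (U : 'M[Z4]_(k, n)) :
  injective (fun a : 'rV_k => a *m U) -> row_free (map_mx red U).
Proof.
(* A kernel vector b of U mod 2 lifts to a vector a with 2 a in the kernel of U. *)
move=> U_inj; apply: inj_row_free => b bU0.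
pose a : 'rV_k := map_mx lift_F2 b.
have red_a : map_mx red a = b by apply/matrixP => i j; rewrite !mxE red_liftK.
have : (2 *: a) *m U = 0 *m U.
  apply/rowP => j; apply/eqP; rewrite -scalemxAl mul0mx mxE [X in _ == X]mxE -red_eq0.
  by move/rowP/(_ j): bU0; rewrite -red_a -map_mxM !mxE => ->.
move/U_inj/rowP => a0; apply/rowP => i; have /eqP := a0 i.
by rewrite !mxE lift_F2_eq0 => /eqP.
Qed.

Lemma unit_colsub k n (U : 'M[Z4]_(k, n)) : row_free (map_mx red U) ->
  exists2 f : 'I_k -> 'I_n, injective f & colsub f U \in unitmx.
Proof.
move=> Ufree; have Ufull : row_full (map_mx red U)^T by rewrite /row_full mxrank_tr.
exists (fullrankfun Ufull); first exact: fullrankfun_inj.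
rewrite unitmxE; apply: red_unit.
have -> : red (\det (colsub (fullrankfun Ufull) U))
          = \det (rowsub (fullrankfun Ufull) (map_mx red U)^T)^T.
  by rewrite -det_map_mx; congr (\det _); apply/matrixP => i j; rewrite !mxE.
by rewrite det_tr -unitfE -unitmxE fullrowsub_unit.
Qed.

Lemma missing_point m (f : 'I_m -> 'I_m.+1) : injective f ->
  exists j, forall k, (k \notin codom f) = (k == j).
Proof.
move=> f_inj; have : #|[predC codom f]| == 1%N.
  by rewrite -(eqn_add2l #|codom f|) cardC card_codom // !card_ord addn1.
by case/card1P => j jP; exists j => k; have := jP k; rewrite !inE.
Qed.

Lemma generator_ortho m (U : 'M[Z4]_(m, m.+1)) : row_free (map_mx red U) ->
  exists (w : word m.+1) j, w 0 j = 1 /\ [set a *m U | a : 'rV_m] = ortho w.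
Proof.
case/unit_colsub => f f_inj Punit; set P := colsub f U in Punit.
case: (missing_point f_inj) => j jP.
(* z spans the kernel of U: it is normalised at the column j outside the invertible block P. *)
pose z : 'cV_m.+1 := delta_mx j 0 - colsub f 1%:M *m (invmx P *m col j U).
have Uz : U *m z = 0.
  have UP : U *m colsub f 1%:M = P by rewrite mulmx_colsub mulmx1.
  by rewrite mulmxBr -colE !mulmxA UP mulmxV // mul1mx subrr.
have zj : z j 0 = 1.
  rewrite !mxE eqxx big1 ?subr0 // => i _; rewrite !mxE.
  by have := jP (f i); rewrite codom_f eq_sym => /esym/negbT/negbTE ->; rewrite mul0r.
exists z^T, j; split; first by rewrite mxE.
have UinO a : a *m U \in ortho z^T by rewrite inE /dot trmxK -mulmxA Uz mulmx0 mxE.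
apply/setP => c; apply/imsetP/idP => [[a _ ->] //|c_ortho].
exists (colsub f c *m invmx P) => //.
apply: (@ortho_eq_off _ _ _ _ j _ c_ortho (UinO _)); first by rewrite mxE.
move=> k; rewrite -jP negbK => /codomP [i ->].
have := congr1 (fun r : 'rV_m => r 0 i) (mulmxKV Punit (colsub f c)).
by rewrite mulmx_colsub mxE => ->; rewrite mxE.
Qed.

Lemma has_type_ortho m (C : {set word m.+1}) :
  has_type C m 0 -> exists (w : word m.+1) j, w 0 j = 1 /\ C = ortho w.
Proof. by case/has_type_generator => U /red_row_free /generator_ortho + ->. Qed.

Lemma ortho_has_type m (w : word m.+1) j : w 0 j = 1 -> has_type (ortho w) m 0.
Proof.
move=> wj; pose u : {ffun 'I_m -> word m.+1} :=
  [ffun i => 'e_ (lift j i) - w 0 (lift j i) *: 'e_ j].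
pose v : {ffun 'I_0 -> word m.+1} := [ffun=> 0].
have tmE p : type_map u v p = \sum_i p.1 i *: u i by rewrite /type_map big_ord0 addr0.
have tm_ortho p : type_map u v p \in ortho w.
  rewrite inE tmE /dot mulmx_suml summxE big1 // => i _.
  by rewrite -/(dot _ w) dotZ ffunE dotB dotZ !dot_delta wj mulr1 subrr mulr0.
have tm_lift p k : type_map u v p 0 (lift j k) = p.1 k.
  rewrite tmE summxE (bigD1 k) //= big1 => [|i ik]; rewrite !mxE ffunE !mxE eqxx /=;
    rewrite [lift j k == j]eq_sym (negbTE (neq_lift j k)) mulr0 subr0.
    by rewrite eqxx mulr1 addr0.
  by rewrite (inj_eq lift_inj) eq_sym (negbTE ik) mulr0.
apply/existsP; exists u; apply/existsP; exists v; apply/and3P; split.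
- by apply/forallP => -[].
- apply/injectiveP => -[a b] [a' b'] tm_eq; congr (_, _).
    by apply/ffunP => i; rewrite -[a i](tm_lift (a, b)) tm_eq tm_lift.
  by apply/ffunP => -[].
apply/eqP/setP => c; apply/imsetP/idP => [[p _ ->] //|c_ortho].
exists ([ffun i => c 0 (lift j i)], [ffun=> false]) => //.
apply: (ortho_eq_off wj c_ortho (tm_ortho _)) => k.
by case: (unliftP j k) => [i -> _|->]; rewrite ?tm_lift ?ffunE ?eqxx.
Qed.

Lemma triv_ext_last m (D : {set word m}) (d : word m.+1) :
  d \in triv_ext (n := m.+1) D -> d 0 ord_max = 0.
Proof. by case/imsetP => c _ ->; rewrite mxE insubN ?ltnn. Qed.

Lemma triv_ext_setT m :
  triv_ext (n := m.+1) [set: word m] = [set d : word m.+1 | d 0 ord_max == 0].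
Proof.
apply/setP => d; rewrite inE; apply/idP/eqP => [/triv_ext_last //|d_max].
apply/imsetP; exists (\row_(k < m) d 0 (widen_ord (leqnSn m) k)) => //.
apply/rowP => i; rewrite !mxE; case: insubP => [k _ ki|].
  by rewrite mxE; congr (d 0 _); apply: val_inj.
rewrite -leqNgt => im; suff -> : i = ord_max by [].
by apply/val_inj/eqP; rewrite eqn_leq im -ltnS ltn_ord.
Qed.

Lemma equiv_triv_ext_zero m (C : {set word m.+1}) D :
  equiv_codes C (triv_ext D) -> exists i, forall c, c \in C -> c 0 i = 0.
Proof.
case/equiv_codesP => s [e eqD]; exists (s ord_max) => c cC.
have : monomial s e c \in triv_ext D by rewrite eqD imset_f.
move/triv_ext_last; rewrite mxE => /(congr1 ( *%R ((-1) ^+ e ord_max))).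
by rewrite signrMK mulr0.
Qed.

Lemma ortho_coord_zero n (w : word n) i j : w 0 j = 1 ->
  (forall c, c \in ortho w -> c 0 i = 0) -> w = 'e_ j.
Proof.
move=> wj c_i; have ij : i = j.
  apply: contra_eq (oner_neq0 Z4) => ij.
  have := c_i ('e_ i - w 0 i *: 'e_ j); rewrite inE dotB dotZ !dot_delta wj mulr1 subrr.
  by rewrite eqxx => /(_ isT); rewrite !mxE !eqxx (negbTE ij) mulr0 subr0.
subst i; apply/rowP => k; rewrite mxE eqxx /=.
have [->|kj] := eqVneq k j; first by rewrite wj.
have := c_i (w 0 k *: 'e_ j - 'e_ k); rewrite inE dotB dotZ !dot_delta wj mulr1 subrr.
by rewrite eqxx => /(_ isT); rewrite !mxE !eqxx [j == k]eq_sym (negbTE kj) subr0 mulr1.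
Qed.

Lemma ortho_delta_equiv m (j : 'I_m.+1) :
  equiv_codes (ortho 'e_ j) (triv_ext (n := m.+1) [set: word m]).
Proof.
apply/equiv_codesP; exists (tperm ord_max j), [ffun=> false]; apply/setP => d.
have [g _ gK] := injF_bij (@monomial_inj _ (tperm ord_max j) [ffun=> false]).
rewrite triv_ext_setT -[d]gK mem_imset ?ortho_delta; last exact: monomial_inj.
by rewrite inE mxE ffunE tpermL mul1r.
Qed.

Lemma ortho_triv_extE m (w : word m.+1) j : w 0 j = 1 ->
  [exists D, is_code D && equiv_codes (ortho w) (triv_ext D)] = (w == 'e_ j).
Proof.
move=> wj; apply/existsP/eqP => [[D /andP [_ /equiv_triv_ext_zero [i]]]|->].
  exact: ortho_coord_zero.
by exists [set: word m]; rewrite setT_code ortho_delta_equiv.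
Qed.

Lemma support_card1 n (w : word n) j :
  w 0 j = 1 -> (w == 'e_ j) = (#|[set i | w 0 i != 0]| == 1%N).
Proof.
move=> wj; apply/eqP/cards1P => [->|[k wk]].
  by exists j; apply/setP => i; rewrite !inE mxE eqxx /=; case: (i == j).
have kj : j = k by apply/set1P; rewrite -wk inE wj.
apply/rowP => i; rewrite mxE eqxx /=; have [->|ij] := eqVneq i j; first by rewrite wj.
have : i \notin [set i | w 0 i != 0] by rewrite wk inE -kj.
by rewrite inE negbK => /eqP.
Qed.

Lemma good_codesP m (C : {set word m.+1}) :
  reflect (exists (w : word m.+1) j, [/\ w 0 j = 1, w != 'e_ j & C = ortho w])
          (C \in good_codes m.+1 m 0).
Proof.
apply: (iffP idP) => [|[w [j [wj w_ej ->]]]]; last first.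
  by rewrite inE ortho_code (ortho_has_type wj) (ortho_triv_extE wj) w_ej.
rewrite inE => /and3P [_ /has_type_ortho [w [j [wj ->]]]].
by rewrite (ortho_triv_extE wj) => w_ej; exists w, j.
Qed.

Lemma card_ord_lt n k : (k <= n)%N -> #|[set i : 'I_n | (i < k)%N]| = k.
Proof.
move=> kn; rewrite -sum1dep_card -(big_ord_widen_cond _ xpredT (fun=> 1%N) kn).
by rewrite sum1_card card_ord.
Qed.

Definition profile_word n (t s : nat) : word n :=
  \row_k (if (k < t)%N then 2 else if (k < s)%N then 1 else 0).

Lemma profile_good_codes m :
  profile (n := m.+1) @: good_codes m.+1 m 0 =
  [set p : 'I_m.+2 * 'I_m.+2 | (p.1 < p.2)%N] :\ (ord0, inord 1%N).
Proof.
apply/setP => -[t s]; rewrite !inE /= xpair_eqE -!val_eqE /= inordK //.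
have -> : ~~ ((t == 0%N :> nat) && (s == 1%N :> nat)) && (t < s)%N
          = (t < s)%N && (s != 1%N :> nat) by lia.
apply/imsetP/andP => [[C /good_codesP [w [j [wj w_ej ->]]]]|[ts s1]].
  rewrite profile_ortho => -[-> ->] /=; split; last by rewrite -(support_card1 wj).
  apply: proper_card; rewrite properE; apply/andP; split.
    by apply/subsetP => i; rewrite !inE => /eqP ->.
  by apply/subsetPn; exists j; rewrite !inE wj.
have sm : (s <= m.+1)%N by rewrite -ltnS.
pose w := profile_word m.+1 t s; pose j : 'I_m.+1 := inord t.
have wj : w 0 j = 1 by rewrite mxE inordK ?ltnn ?ts // (leq_trans ts).
have card2 : #|[set i | w 0 i == 2]| = t.
  rewrite -[RHS](card_ord_lt (leq_trans (ltnW ts) sm)); apply: eq_card => i.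
  by rewrite !inE mxE; case: ifP => // _; case: ifP.
have cardNZ : #|[set i | w 0 i != 0]| = s.
  rewrite -[RHS](card_ord_lt sm); apply: eq_card => i; rewrite !inE mxE.
  case: ltnP => [it|]; first by rewrite (ltn_trans it ts).
  by case: ifP.
exists (ortho w).
  by apply/good_codesP; exists w, j; rewrite (support_card1 wj) cardNZ.
by rewrite profile_ortho; congr (_, _); apply: val_inj; rewrite /= ?card2 ?cardNZ.
Qed.

Lemma card_lt_pairs k : #|[set p : 'I_k * 'I_k | (p.1 < p.2)%N]| = 'C(k, 2).
Proof.
rewrite -sum1dep_card big_mkcond /=.
rewrite -(pair_bigA _ (fun i j : 'I_k => if (i < j)%N then 1%N else 0%N)) /= exchange_big.
rewrite -bin2_sum big_mkord; apply: eq_bigr => j _.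
by rewrite -big_mkcond sum1dep_card card_ord_lt // ltnW.
Qed.

Lemma card_classes (T U : finType) (G : {set T}) (R : rel T) (f : T -> U) :
  {in G &, forall x y, R x y = (f x == f y)} ->
  #|[set [set y in G | R x y] | x in G]| = #|f @: G|.
Proof.
move=> Rf; pose cls u := [set y in G | f y == u].
have -> : [set [set y in G | R x y] | x in G] = cls @: (f @: G).
  rewrite -imset_comp; apply: eq_in_imset => x xG; apply/setP => y; rewrite !inE.
  by case yG: (y \in G); rewrite //= Rf // eq_sym.
apply: card_in_imset => _ _ /imsetP [x xG ->] /imsetP [y yG ->] /setP /(_ x).
by rewrite !inE xG !eqxx => /esym/eqP.
Qed.

Local Close Scope ring_scope.

Theorem mainTheorem8 (n : nat) : (0 < n)%N ->
  Nprime n n.-1 0 = (n * (n + 1) %/ 2 - 1)%N.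
Proof.
case: n => [//|m] _ /=; rewrite /Nprime (card_classes (f := profile (n := m.+1))); last first.
  move=> C D /good_codesP [w [_ [_ _ ->]]] /good_codesP [w' [_ [_ _ ->]]].
  exact: equiv_ortho.
rewrite profile_good_codes.
have pair01 : (ord0, inord 1) \in [set p : 'I_m.+2 * 'I_m.+2 | p.1 < p.2].
  by rewrite inE /= inordK.
have := cardsD1 (ord0, inord 1) [set p : 'I_m.+2 * 'I_m.+2 | p.1 < p.2].
by rewrite pair01 card_lt_pairs bin2 -divn2 addn1 mulnC => ->; rewrite add1n subn1.
Qed.
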